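(* Let $\mathcal{B}$ be any unicast index coding problem with receivers $u_1,\dots,u_n$ and demand sets $W_1,\dots,W_n$, and let $G$ be its equivalent single unicast problem (ESUP). Then $$\beta^*_G\big(\max_i |W_i|\big)\le \beta^*_{\mathcal{B}}(1)\le \beta^*_G(1).$$
   Context: Index coding model. A unicast index coding problem has $n$ receivers $u_1,\dots,u_n$ and $N$ messages $\mathbf{x}_1,\dots,\mathbf{x}_N$, each a vector in $\mathcal{A}^m$ for a finite alphabet $\mathcal{A}$ and a positive integer $m$ (all messages have the same length). Receiver $u_i$ demands $\mathbf{x}_j$, $j\in W_i$, and knows $\mathbf{x}_j$, $j\in K_i$, where $W_i,K_i\subseteq[N]$, $W_i\cap K_i=\emptyset$, the $W_i$ are pairwise disjoint and every message is demanded by exactly one receiver. A single unicast problem is the case where every receiver demands exactly one message ($n=N$). An index code consists of an encoder mapping the messages to a codeword $\mathbf{c}\in\mathcal{A}^\ell$, subsets $R_i\subseteq[\ell]$ (receiver $u_i$ observes only $\mathbf{c}_{R_i}$), and decoders at each $u_i$ mapping $(\mathbf{c}_{R_i},\mathbf{x}_{K_i})$ to $\mathbf{x}_{W_i}$; it is valid if every receiver decodes correctly for all message values. Broadcast rate $\beta=\ell/m$; locality at $u_i$ is $r_i=|R_i|/(m|W_i|)$; locality of the code is $r=\max_i r_i$. For a problem $\mathcal{P}$, $\beta^*_{\mathcal{P}}(r)$ is the infimum of rates of valid index codes, over all $m\ge1$, with locality at most $r$. ESUP: given $\mathcal{B}$, its ESUP is the single unicast problem with the same $N$ messages and $N=\sum_i|W_i|$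 receivers: for each $u_i$ and each $j\in W_i$ there is one receiver that demands only $\mathbf{x}_j$ and has side information $\mathbf{x}_{K_i}$. *)

From mathcomp Require Import all_boot all_order all_algebra.
From mathcomp Require Import boolp classical_sets reals constructive_ereal ereal.
Set Implicit Arguments. Unset Strict Implicit. Unset Printing Implicit Defensive.
Import Order.TTheory GRing.Theory Num.Theory.
Local Open Scope classical_set_scope.
Local Open Scope ring_scope.

(* An index coding problem with n receivers and N messages:
   receiver i demands the messages in W i and knows those in K i. *)
Record ic_problem (n N : nat) := ICProblem {
  icW : 'I_n -> {set 'I_N};
  icK : 'I_n -> {set 'I_N} }.

(* Unicast: W_i, K_i disjoint; W_i pairwise disjoint; every message is
   demanded by (exactly) one receiver; each W_i nonempty (needed for the
   locality |R_i|/(m|W_i|) to be defined). *)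
Definition unicast (n N : nat) (P : ic_problem n N) : Prop :=
  [/\ (forall i j, j \in icW P i -> j \notin icK P i),
      (forall i i' j, i != i' -> j \in icW P i -> j \notin icW P i'),
      (forall j, exists i, j \in icW P i) &
      (forall i, exists j, j \in icW P i)].

(* Equivalent single unicast problem: one receiver per message j, demanding
   only x_j, with the side information K_i of the receiver u_i with j in W_i. *)
Definition esup_K (n N : nat) (P : ic_problem n N) (j : 'I_N) : {set 'I_N} :=
  if [pick i | j \in icW P i] is Some i then icK P i else finset.set0.

Definition esup (n N : nat) (P : ic_problem n N) : ic_problem N N :=
  ICProblem (fun j : 'I_N => finset.set1 j) (esup_K P).

(* An index code with message length m and code length l over alphabet A:
   encoder E and observed positions Rs i. *)
Definition valid_code (A : Type) (n N : nat) (P : ic_problem n N) (m l : nat)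
  (E : ('I_N -> 'I_m -> A) -> 'I_l -> A) (Rs : 'I_n -> {set 'I_l}) : Prop :=
  forall i : 'I_n,
  exists D : ({k : 'I_l | k \in Rs i} -> A) ->
             ({j : 'I_N | j \in icK P i} -> 'I_m -> A) ->
             forall j : 'I_N, j \in icW P i -> 'I_m -> A,
  forall (x : 'I_N -> 'I_m -> A) (j : 'I_N) (hj : j \in icW P i),
    D (fun k => E x (sval k)) (fun j' => x (sval j')) j hj = x j.

Definition locality_le (R : realType) (n N : nat) (P : ic_problem n N)
  (m l : nat) (Rs : 'I_n -> {set 'I_l}) (r : R) : Prop :=
  forall i : 'I_n, (#|Rs i|%:R / (m%:R * #|icW P i|%:R) <= r).

Definition beta_star (A : finType) (R : realType) (n N : nat)
  (P : ic_problem n N) (r : R) : \bar R :=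
  ereal_inf [set x : \bar R | exists (m l : nat)
      (E : ('I_N -> 'I_m -> A) -> 'I_l -> A) (Rs : 'I_n -> {set 'I_l}),
      [/\ (0 < m)%N, valid_code P E Rs, locality_le P m Rs r &
          x = (l%:R / m%:R)%:E]].

From mathcomp Require Import all_boot all_order all_algebra.
From mathcomp Require Import boolp classical_sets reals constructive_ereal ereal.
Set Implicit Arguments. Unset Strict Implicit. Unset Printing Implicit Defensive.
Import Order.TTheory GRing.Theory Num.Theory.
Local Open Scope ring_scope.

(* A code for the problem is turned into a code for its ESUP with the same
   encoder: the ESUP receiver for x_j reads what the receiver u_i demanding x_j
   reads, i.e. at most r m |W_i| <= r m max_i |W_i| symbols.  Conversely, from a
   code for the ESUP, u_i reads the union of what the ESUP receivers for its
   demands read, at most |W_i| r m symbols.  Both transformations keep the rate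
   l/m, so they compare the infima. *)

Lemma card_bigcup_leq_sum (I T : finType) (W : {pred I}) (F : I -> {set T}) :
  (#|\bigcup_(j in W) F j| <= \sum_(j in W) #|F j|)%N.
Proof.
elim/big_ind2: _ => [|n U n' V leUn leVn|//]; first by rewrite cards0.
exact: leq_trans (leq_card_setU U V) (leq_add leUn leVn).
Qed.

Section Decoding.

Variables (A : Type) (N m l : nat) (E : ('I_N -> 'I_m -> A) -> 'I_l -> A).

Definition decodable (Rc : {set 'I_l}) (K : {set 'I_N}) (j : 'I_N) : Prop :=
  exists D : ({k : 'I_l | k \in Rc} -> A) ->
             ({j' : 'I_N | j' \in K} -> 'I_m -> A) -> 'I_m -> A,
  forall x, D (fun k => E x (sval k)) (fun j' => x (sval j')) = x j.

Lemma decodable_subset (Rc Rc' : {set 'I_l}) (K K' : {set 'I_N}) (j : 'I_N) :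
  Rc \subset Rc' -> K \subset K' -> decodable Rc K j -> decodable Rc' K' j.
Proof.
move=> /fintype.subsetP sRc /fintype.subsetP sK [D decD].
exists (fun c s => D (fun k => c (exist _ (sval k) (sRc _ (svalP k))))
                     (fun j' => s (exist _ (sval j') (sK _ (svalP j'))))).
exact: decD.
Qed.

Lemma valid_codeP (n : nat) (P : ic_problem n N) (Rs : 'I_n -> {set 'I_l}) :
  valid_code P E Rs <->
  forall i j, j \in icW P i -> decodable (Rs i) (icK P i) j.
Proof.
split=> [valid i j Wij | dec i].
  have [D decD] := valid i.
  by exists (fun c s => D c s j Wij) => x; apply: decD.
have decj j (Wij : j \in icW P i) := cid (dec i j Wij).
exists (fun c s j Wij => sval (decj j Wij) c s) => x j Wij.
exact: svalP (decj j Wij) x.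
Qed.

End Decoding.

Lemma esup_K_eq (n N : nat) (P : ic_problem n N) (i : 'I_n) (j : 'I_N) :
  unicast P -> j \in icW P i -> esup_K P j = icK P i.
Proof.
case=> _ W_disj _ _ Wij; rewrite /esup_K; case: pickP => [i' Wi'j | noW].
  by case: (eqVneq i' i) => [-> // | ne]; move: (W_disj _ _ _ ne Wi'j); rewrite Wij.
by move: (noW i); rewrite Wij.
Qed.

Section ESUPCodes.

Variables (A : Type) (n N m l : nat) (P : ic_problem n N).
Variables (E : ('I_N -> 'I_m -> A) -> 'I_l -> A).
Hypothesis unicastP : unicast P.

Lemma valid_code_esup (demander : 'I_N -> 'I_n) (Rs : 'I_n -> {set 'I_l}) :
  (forall j, j \in icW P (demander j)) ->
  valid_code P E Rs -> valid_code (esup P) E (Rs \o demander).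
Proof.
move=> demanderP /valid_codeP dec; apply/valid_codeP => j _ /set1P ->.
rewrite /= (esup_K_eq unicastP (demanderP j)); exact: dec.
Qed.

Lemma valid_code_of_esup (Rs : 'I_N -> {set 'I_l}) :
  valid_code (esup P) E Rs ->
  valid_code P E (fun i => \bigcup_(j in icW P i) Rs j).
Proof.
move=> /valid_codeP dec; apply/valid_codeP => i j Wij.
have := dec j j (set11 j); rewrite /= (esup_K_eq unicastP Wij).
by apply: decodable_subset; [exact: finset.bigcup_sup | exact: subxx].
Qed.

End ESUPCodes.

Lemma locality_leP (R : realType) (n N m l : nat) (P : ic_problem n N)
    (Rs : 'I_n -> {set 'I_l}) (r : R) :
  (0 < m)%N -> (forall i, 0 < #|icW P i|)%N ->
  locality_le P m Rs r <-> forall i, #|Rs i|%:R <= r * (m * #|icW P i|)%:R.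
Proof.
move=> m_gt0 W_gt0; have mW_gt0 i : 0 < (m * #|icW P i|)%:R :> R.
  by rewrite ltr0n muln_gt0 m_gt0 W_gt0.
by split=> loc i; have := loc i; rewrite -natrM ler_pdivrMr.
Qed.

Section Locality.

Variables (R : realType) (n N m l : nat) (P : ic_problem n N).
Hypothesis m_gt0 : (0 < m)%N.
Hypothesis unicastP : unicast P.

Let W_gt0 i : (0 < #|icW P i|)%N.
Proof. by case: unicastP => _ _ _ /(_ i) [j Wij]; apply/card_gt0P; exists j. Qed.

Let esupW_gt0 j : (0 < #|icW (esup P) j|)%N.
Proof. by rewrite cards1. Qed.

Lemma locality_le_esup (demander : 'I_N -> 'I_n) (Rs : 'I_n -> {set 'I_l}) (r : R) :
  (forall j, j \in icW P (demander j)) ->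
  locality_le P m Rs r ->
  locality_le (esup P) m (Rs \o demander) (r * (\max_(i < n) #|icW P i|)%N%:R).
Proof.
move=> demanderP loc; apply/(locality_leP _ _ m_gt0 esupW_gt0) => j /=.
have r_ge0 : 0 <= r by apply: le_trans (loc (demander j)); rewrite divr_ge0 ?mulr_ge0.
move/(locality_leP _ _ m_gt0 W_gt0): loc => loc; rewrite cards1 muln1.
apply: le_trans (loc (demander j)) _.
by rewrite -mulrA ler_wpM2l // mulrC -natrM ler_nat leq_mul2l leq_bigmax orbT.
Qed.

Lemma locality_le_of_esup (Rs : 'I_N -> {set 'I_l}) (r : R) :
  locality_le (esup P) m Rs r ->
  locality_le P m (fun i => \bigcup_(j in icW P i) Rs j) r.
Proof.
move=> /(locality_leP _ _ m_gt0 esupW_gt0) loc; apply/(locality_leP _ _ m_gt0 W_gt0) => i.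
apply: le_trans (_ : (\sum_(j in icW P i) #|Rs j|)%:R <= _).
  by rewrite ler_nat card_bigcup_leq_sum.
rewrite natr_sum natrM mulrA mulr_natr -sumr_const.
by apply: ler_sum => j _; have := loc j; rewrite cards1 muln1.
Qed.

End Locality.

Lemma beta_star_le (A : finType) (R : realType) (n n' N : nat)
    (P : ic_problem n N) (Q : ic_problem n' N) (r r' : R) :
  (forall m l (E : ('I_N -> 'I_m -> A) -> 'I_l -> A) (Rs : 'I_n -> {set 'I_l}),
     (0 < m)%N -> valid_code P E Rs -> locality_le P m Rs r ->
     exists Rs' : 'I_n' -> {set 'I_l}, valid_code Q E Rs' /\ locality_le Q m Rs' r') ->
  (beta_star A Q r' <= beta_star A P r)%E.
Proof.
move=> transfer; apply: ereal_inf_le_tmp => _ [m [l [E [Rs [m_gt0 valid loc ->]]]]].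
have [Rs' [valid' loc']] := transfer m l E Rs m_gt0 valid loc.
by exists m, l, E, Rs'.
Qed.

Theorem theorem2 (A : finType) (R : realType) (n N : nat) (P : ic_problem n N) :
  unicast P ->
  ((beta_star A (esup P) ((\max_(i < n) #|icW P i|)%N%:R : R)
      <= beta_star A P (1 : R))%E /\
   (beta_star A P (1 : R) <= beta_star A (esup P) (1 : R))%E).
Proof.
move=> unicastP; have [_ _ demanded _] := unicastP.
have [demander demanderP] := choice demanded.
split; apply: beta_star_le => m l E Rs m_gt0 valid loc.
- exists (Rs \o demander); split; first exact: valid_code_esup.
  by rewrite -[X in locality_le _ _ _ X]mul1r; exact: locality_le_esup.
- exists (fun i => \bigcup_(j in icW P i) Rs j).
  by split; [exact: valid_code_of_esup | exact: locality_le_of_esup].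
Qed.
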